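(* For every real $0<B<1$ and positive integer $L$, $$\sum_{\ell=1}^L\frac{L+1-\ell}{\sin^2\left(\frac{\pi\ell B}{L}\right)}=\frac{L^3}{6B^2}-\frac{L^2\log L}{\pi^2B^2}+O_B(L^2),$$ where the implied constant depends only on $B$. *)

From Stdlib Require Import Reals.
Open Scope R_scope.

(* S(B,L) = \sum_{l=1}^{L} (L+1-l) / sin^2(pi l B / L).
   sum_f_R0 f n = f 0 + ... + f n; here k = 0..L-1 and l = k+1 = 1..L. *)
Definition lemma8_sum (B : R) (L : nat) : R :=
  sum_f_R0 (fun k => let l := INR (S k) in
              (INR L + 1 - l) / (sin (PI * l * B / INR L)) ^ 2) (pred L).

From Stdlib Require Import Reals Lra Lia.
Open Scope R_scope.

(* Write 1/sin^2 x = 1/x^2 + (1/sin^2 x - 1/x^2). The bracket is bounded on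
   (0, PI B] because B < 1, so it contributes O_B(L^2). The 1/x^2 part is
   L^2/(PI^2 B^2) times sum_{l<=L} (L+1-l)/l^2 = (L+1) sum 1/l^2 - sum 1/l, which
   is L PI^2/6 - ln L + O(1) as soon as sum_{l<=n} 1/l^2 = PI^2/6 - O(1/n).

   That rate comes from the duplication formula csc^2 x + sec^2 x = 4 csc^2 (2x):
   it gives sum_{l<n} csc^2 ((2l+1) PI/(2n)) = n^2 for n a power of two.
   Comparing csc^2 t with 1/t^2 at t = (2l+1) PI/(4n) then puts
   sum_{l<n} 1/(2l+1)^2 within PI^2/(16n) of PI^2/8, and the splitting
   sum_{l<=2n} 1/l^2 = sum_{l<n} 1/(2l+1)^2 + (1/4) sum_{l<=n} 1/l^2
   transfers this to sum 1/l^2. *)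

Lemma sum_f_R0_Rabs_le (f : nat -> R) (c : R) (n : nat) :
  (forall k, (k <= n)%nat -> Rabs (f k) <= c) ->
  Rabs (sum_f_R0 f n) <= c * INR (S n).
Proof.
  intros Hf. eapply Rle_trans; [apply Rsum_abs|].
  rewrite <- sum_cte. apply sum_Rle. exact Hf.
Qed.

Lemma sum_f_R0_reverse (n : nat) (f : nat -> R) :
  sum_f_R0 (fun k => f (n - k)%nat) n = sum_f_R0 f n.
Proof.
  revert f; induction n as [|n IH]; intros f; [reflexivity|].
  rewrite tech5, Nat.sub_diag.
  rewrite (sum_eq _ (fun k => f (S (n - k))%nat)) by (intros i Hi; f_equal; lia).
  rewrite (IH (fun j => f (S j))), (decomp_sum f (S n)) by lia.
  simpl pred. ring.
Qed.

Lemma sum_f_R0_halves (f : nat -> R) (n : nat) :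
  sum_f_R0 f (2 * n + 1) = sum_f_R0 f n + sum_f_R0 (fun j => f (S n + j)%nat) n.
Proof.
  rewrite (tech2 f n (2 * n + 1)) by lia.
  replace (2 * n + 1 - S n)%nat with n by lia. reflexivity.
Qed.

Lemma x_mul_cos_le_sin x : 0 <= x <= PI / 2 -> x * cos x <= sin x.
Proof.
  intros Hx. assert (Hpi := PI_4).
  destruct (sin_bound x 0) as [Hsin _]; [lra|lra|].
  destruct (cos_bound x 0) as [_ Hcos]; [lra|lra|].
  unfold sin_approx, cos_approx, sin_term, cos_term in Hsin, Hcos; simpl in Hsin, Hcos.
  assert (Hx2 : x ^ 2 <= 4) by nra.
  assert (x * cos x <= x * (1 - x ^ 2 / 2 + x ^ 4 / 24)) by (apply Rmult_le_compat_l; lra).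
  assert (x * (1 - x ^ 2 / 2 + x ^ 4 / 24) <= x - x ^ 3 / 6).
  { assert (0 <= x ^ 3) by (apply pow_le; lra).
    replace (x * (1 - x ^ 2 / 2 + x ^ 4 / 24)) with (x - x ^ 3 / 6 - x ^ 3 * (8 - x ^ 2) / 24)
      by field.
    nra. }
  lra.
Qed.

Lemma inv_sin_sq_bounds x : 0 < x <= PI / 2 ->
  / x ^ 2 <= / sin x ^ 2 <= 1 + / x ^ 2.
Proof.
  intros Hx. assert (Hpi := PI_RGT_0).
  assert (Hs : 0 < sin x) by (apply sin_gt_0; lra).
  assert (Hsx : sin x < x) by (apply sin_lt_x; lra).
  split.
  - apply Rinv_le_contravar; [apply pow_lt; lra | apply pow_incr; lra].
  - assert (Hxc := x_mul_cos_le_sin x ltac:(lra)).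
    assert (Hc : 0 <= cos x) by (apply cos_ge_0; lra).
    assert (Hsc := sin2_cos2 x). unfold Rsqr in Hsc.
    assert (Hxc2 : (x * cos x) ^ 2 <= sin x ^ 2) by (apply pow_incr; nra).
    (* [1/sin^2 <= 1 + 1/x^2] is [x^2 cos^2 x <= sin^2 x] after clearing denominators. *)
    apply Rmult_le_reg_r with (sin x ^ 2 * x ^ 2); [apply Rmult_lt_0_compat; apply pow_lt; lra|].
    replace (/ sin x ^ 2 * (sin x ^ 2 * x ^ 2)) with (x ^ 2) by (field; lra).
    replace ((1 + / x ^ 2) * (sin x ^ 2 * x ^ 2)) with (sin x ^ 2 * x ^ 2 + sin x ^ 2)
      by (field; lra).
    replace (x ^ 2) with (x ^ 2 * sin x ^ 2 + (x * cos x) ^ 2) at 1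
      by (transitivity (x ^ 2 * (sin x * sin x + cos x * cos x)); [ring | rewrite Hsc; ring]).
    lra.
Qed.

Lemma inv_sin_sq_sub_inv_sq_bound a x : 0 < a < PI -> 0 < x <= a ->
  Rabs (/ sin x ^ 2 - / x ^ 2) <= 1 + / sin a ^ 2.
Proof.
  intros Ha Hx. assert (Hpi := PI_RGT_0).
  assert (Hsa : 0 < sin a) by (apply sin_gt_0; lra).
  assert (Hisa : 0 < / sin a ^ 2) by (apply Rinv_0_lt_compat, pow_lt; lra).
  destruct (Rle_lt_dec x (PI / 2)) as [Hle|Hlt].
  - destruct (inv_sin_sq_bounds x ltac:(lra)). rewrite Rabs_right; lra.
  - assert (Hs : 0 < sin x) by (apply sin_gt_0; lra).
    assert (/ x ^ 2 <= / sin x ^ 2).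
    { apply Rinv_le_contravar; [apply pow_lt; lra|].
      apply pow_incr. split; [lra|]. left. apply sin_lt_x. lra. }
    assert (/ sin x ^ 2 <= / sin a ^ 2).
    { apply Rinv_le_contravar; [apply pow_lt; lra|].
      apply pow_incr. split; [lra|]. apply sin_decr_1; lra. }
    assert (0 < / x ^ 2) by (apply Rinv_0_lt_compat, pow_lt; lra).
    rewrite Rabs_right; lra.
Qed.

Definition csc_angle (n l : nat) : R := (2 * INR l + 1) * PI / (2 * INR n).

Definition csc_sq_sum (p : nat) : R :=
  sum_f_R0 (fun l => / sin (csc_angle (S p) l) ^ 2) p.

Lemma INR_S_double p : INR (S (2 * p + 1)) = 2 * INR (S p).
Proof. rewrite S_INR, plus_INR, mult_INR, (S_INR p). simpl. ring. Qed.

Lemma csc_angle_double p l :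
  2 * csc_angle (S (2 * p + 1)) l = csc_angle (S p) l.
Proof.
  unfold csc_angle. rewrite INR_S_double.
  assert (0 < INR (S p)) by apply lt_0_INR, Nat.lt_0_succ. field. lra.
Qed.

Lemma csc_angle_shift p l :
  csc_angle (S (2 * p + 1)) (S p + l) = csc_angle (S (2 * p + 1)) l + PI / 2.
Proof.
  unfold csc_angle. rewrite INR_S_double, plus_INR.
  assert (0 < INR (S p)) by apply lt_0_INR, Nat.lt_0_succ. field. lra.
Qed.

Lemma csc_angle_compl p l : (l <= p)%nat ->
  csc_angle (S (2 * p + 1)) (p - l) = PI / 2 - csc_angle (S (2 * p + 1)) l.
Proof.
  intros Hl. unfold csc_angle. rewrite INR_S_double, minus_INR, S_INR by exact Hl.
  assert (0 <= INR p) by apply pos_INR. field. lra.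
Qed.

Lemma csc_angle_pos n l : (0 < n)%nat -> 0 < csc_angle n l.
Proof.
  intros Hn. unfold csc_angle. assert (Hpi := PI_RGT_0).
  assert (0 <= INR l) by apply pos_INR. assert (0 < INR n) by (apply lt_0_INR; exact Hn).
  apply Rdiv_lt_0_compat; [apply Rmult_lt_0_compat|]; lra.
Qed.

Lemma csc_angle_lt_PI2 p l : (l <= p)%nat ->
  0 < csc_angle (S (2 * p + 1)) l < PI / 2.
Proof.
  intros Hl. assert (H := csc_angle_pos (S (2 * p + 1)) (p - l) (Nat.lt_0_succ _)).
  rewrite csc_angle_compl in H by exact Hl.
  split; [apply csc_angle_pos, Nat.lt_0_succ | lra].
Qed.

Lemma inv_sin_sq_add_inv_cos_sq x : sin x <> 0 -> cos x <> 0 ->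
  / sin x ^ 2 + / cos x ^ 2 = 4 / sin (2 * x) ^ 2.
Proof.
  intros Hs Hc. rewrite sin_2a.
  assert (Hsc := sin2_cos2 x). unfold Rsqr in Hsc.
  transitivity ((sin x * sin x + cos x * cos x) / (sin x ^ 2 * cos x ^ 2)); [field; auto|].
  rewrite Hsc. field. auto.
Qed.

Lemma csc_sq_sum_halves p : csc_sq_sum (2 * p + 1) =
  sum_f_R0 (fun l => let x := csc_angle (S (2 * p + 1)) l in / sin x ^ 2 + / cos x ^ 2) p.
Proof.
  unfold csc_sq_sum. rewrite sum_f_R0_halves, <- plus_sum. apply sum_eq. intros l _.
  rewrite csc_angle_shift, sin_plus, sin_PI2, cos_PI2. f_equal. f_equal. f_equal. ring.
Qed.

Lemma csc_sq_sum_double p : csc_sq_sum (2 * p + 1) = 4 * csc_sq_sum p.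
Proof.
  rewrite csc_sq_sum_halves. unfold csc_sq_sum. rewrite scal_sum. apply sum_eq.
  intros l Hl. destruct (csc_angle_lt_PI2 p l Hl). assert (Hpi := PI_RGT_0). cbv zeta.
  rewrite inv_sin_sq_add_inv_cos_sq, csc_angle_double; [unfold Rdiv; ring | |].
  - apply Rgt_not_eq, sin_gt_0; lra.
  - apply Rgt_not_eq, cos_gt_0; lra.
Qed.

Lemma csc_sq_sum_first_half p :
  sum_f_R0 (fun l => / sin (csc_angle (S (2 * p + 1)) l) ^ 2) p = csc_sq_sum (2 * p + 1) / 2.
Proof.
  rewrite csc_sq_sum_halves, plus_sum.
  rewrite <- (sum_f_R0_reverse p (fun l => / cos (csc_angle (S (2 * p + 1)) l) ^ 2)).
  rewrite (sum_eq (fun k => / cos (csc_angle (S (2 * p + 1)) (p - k)) ^ 2)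
                  (fun l => / sin (csc_angle (S (2 * p + 1)) l) ^ 2)).
  - field.
  - intros l Hl. rewrite csc_angle_compl, cos_shift by exact Hl. reflexivity.
Qed.

Lemma csc_sq_sum_pow2 k : csc_sq_sum (2 ^ k - 1) = (2 ^ k) ^ 2.
Proof.
  induction k as [|k IH].
  - unfold csc_sq_sum, csc_angle. simpl.
    replace ((2 * 0 + 1) * PI / (2 * 1)) with (PI / 2) by field.
    rewrite sin_PI2. simpl. field.
  - assert (H := Nat.pow_nonzero 2 k ltac:(lia)).
    replace (2 ^ S k - 1)%nat with (2 * (2 ^ k - 1) + 1)%nat by (simpl; lia).
    rewrite csc_sq_sum_double, IH. simpl. ring.
Qed.

Definition odd_inv_sq_sum (p : nat) : R := sum_f_R0 (fun l => / (2 * INR l + 1) ^ 2) p.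

Definition inv_sq_sum (p : nat) : R := sum_f_R0 (fun k => / INR (S k) ^ 2) p.

Lemma odd_inv_sq_sum_csc_bounds p : let N := INR (S p) in
  16 * N ^ 2 / PI ^ 2 * odd_inv_sq_sum p <= csc_sq_sum (2 * p + 1) / 2
  <= N + 16 * N ^ 2 / PI ^ 2 * odd_inv_sq_sum p.
Proof.
  intros N. rewrite <- csc_sq_sum_first_half. unfold odd_inv_sq_sum.
  assert (E : forall l, / csc_angle (S (2 * p + 1)) l ^ 2
                        = / (2 * INR l + 1) ^ 2 * (16 * N ^ 2 / PI ^ 2)).
  { intros l. unfold csc_angle, N. rewrite INR_S_double.
    assert (0 <= INR l) by apply pos_INR. assert (0 < INR (S p)) by apply lt_0_INR, Nat.lt_0_succ.
    assert (Hpi := PI_RGT_0). field. repeat split; lra. }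
  rewrite scal_sum. split.
  - apply sum_Rle. intros l Hl. rewrite <- E.
    apply inv_sin_sq_bounds. destruct (csc_angle_lt_PI2 p l Hl). lra.
  - unfold N at 1. rewrite <- (Rmult_1_l (INR (S p))), <- sum_cte, <- plus_sum.
    apply sum_Rle. intros l Hl. rewrite <- E.
    apply inv_sin_sq_bounds. destruct (csc_angle_lt_PI2 p l Hl). lra.
Qed.

Lemma INR_pow2_pred k : INR (S (2 ^ k - 1)) = 2 ^ k.
Proof.
  assert (H := Nat.pow_nonzero 2 k ltac:(lia)).
  replace (S (2 ^ k - 1)) with (2 ^ k)%nat by lia. rewrite pow_INR. reflexivity.
Qed.

Lemma odd_inv_sq_sum_pow2 k :
  PI ^ 2 / 8 - PI ^ 2 / (16 * 2 ^ k) <= odd_inv_sq_sum (2 ^ k - 1) <= PI ^ 2 / 8.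
Proof.
  assert (HB := odd_inv_sq_sum_csc_bounds (2 ^ k - 1)). cbv zeta in HB.
  assert (H := Nat.pow_nonzero 2 k ltac:(lia)).
  replace (2 * (2 ^ k - 1) + 1)%nat with (2 ^ S k - 1)%nat in HB by (simpl; lia).
  rewrite INR_pow2_pred, csc_sq_sum_pow2 in HB.
  replace ((2 ^ S k) ^ 2 / 2) with (2 * (2 ^ k) ^ 2) in HB by (simpl; field).
  assert (Hpi := PI_RGT_0). assert (Hk : 0 < 2 ^ k) by (apply pow_lt; lra).
  set (N := 2 ^ k) in *. set (O := odd_inv_sq_sum (2 ^ k - 1)) in *.
  assert (Hc : 0 < 16 * N ^ 2 / PI ^ 2) by (apply Rdiv_lt_0_compat; [|apply pow_lt]; nra).
  destruct HB as [HB1 HB2]. split.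
  - apply Rmult_le_reg_l with (16 * N ^ 2 / PI ^ 2); [exact Hc|].
    replace (16 * N ^ 2 / PI ^ 2 * (PI ^ 2 / 8 - PI ^ 2 / (16 * N))) with (2 * N ^ 2 - N)
      by (field; lra). lra.
  - apply Rmult_le_reg_l with (16 * N ^ 2 / PI ^ 2); [exact Hc|].
    replace (16 * N ^ 2 / PI ^ 2 * (PI ^ 2 / 8)) with (2 * N ^ 2) by (field; lra). lra.
Qed.

Lemma inv_sq_sum_double p : inv_sq_sum (2 * p + 1) = odd_inv_sq_sum p + inv_sq_sum p / 4.
Proof.
  induction p as [|p IH].
  - unfold inv_sq_sum, odd_inv_sq_sum. simpl. field.
  - replace (2 * S p + 1)%nat with (S (S (2 * p + 1))) by lia.
    unfold inv_sq_sum, odd_inv_sq_sum in *. rewrite !tech5, IH.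
    assert (0 <= INR p) by apply pos_INR.
    rewrite !S_INR, plus_INR, mult_INR, ?S_INR. simpl. field. repeat split; lra.
Qed.

Lemma inv_sq_sum_pow2 k : 0 <= PI ^ 2 / 6 - inv_sq_sum (2 ^ k - 1) <= 4 / 2 ^ k.
Proof.
  assert (Hpi := PI_RGT_0). assert (Hpi4 := PI_4).
  induction k as [|k IH].
  - assert (Hpi3 := PI2_3_2). unfold inv_sq_sum. simpl. split; nra.
  - assert (H := Nat.pow_nonzero 2 k ltac:(lia)).
    replace (2 ^ S k - 1)%nat with (2 * (2 ^ k - 1) + 1)%nat by (simpl; lia).
    rewrite inv_sq_sum_double.
    destruct (odd_inv_sq_sum_pow2 k) as [O1 O2].
    assert (Hk : 0 < 2 ^ k) by (apply pow_lt; lra).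
    assert (PI ^ 2 / (16 * 2 ^ k) <= 1 / 2 ^ k).
    { apply Rmult_le_reg_r with (16 * 2 ^ k); [lra|].
      replace (PI ^ 2 / (16 * 2 ^ k) * (16 * 2 ^ k)) with (PI ^ 2) by (field; lra).
      replace (1 / 2 ^ k * (16 * 2 ^ k)) with 16 by (field; lra). nra. }
    (* [PI^2/6] is the fixed point of [s |-> PI^2/8 + s/4]. *)
    replace (PI ^ 2 / 6 - (odd_inv_sq_sum (2 ^ k - 1) + inv_sq_sum (2 ^ k - 1) / 4))
      with ((PI ^ 2 / 8 - odd_inv_sq_sum (2 ^ k - 1))
            + (PI ^ 2 / 6 - inv_sq_sum (2 ^ k - 1)) / 4) by field.
    replace (4 / 2 ^ S k) with (1 / 2 ^ k + (4 / 2 ^ k) / 4) by (simpl; field; lra).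
    lra.
Qed.

Lemma inv_sq_sum_incr p d :
  0 <= inv_sq_sum (p + d) - inv_sq_sum p <= / INR (S p) - / INR (S (p + d)).
Proof.
  induction d as [|d IH].
  - rewrite Nat.add_0_r. lra.
  - rewrite Nat.add_succ_r. unfold inv_sq_sum in *. rewrite tech5.
    set (a := INR (S (p + d))) in *.
    assert (Ha : INR (S (S (p + d))) = a + 1) by apply S_INR.
    assert (1 <= a) by (unfold a; rewrite S_INR; assert (0 <= INR (p + d)) by apply pos_INR; lra).
    rewrite Ha.
    assert (0 <= / (a + 1) ^ 2) by (left; apply Rinv_0_lt_compat, pow_lt; lra).
    (* telescoping: [1/(a+1)^2 <= 1/(a(a+1)) = 1/a - 1/(a+1)] *)
    assert (/ (a + 1) ^ 2 <= / a - / (a + 1)).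
    { replace (/ a - / (a + 1)) with (/ (a * (a + 1))) by (field; lra).
      apply Rinv_le_contravar; nra. }
    lra.
Qed.

Lemma pow2_between n : exists k, (S n <= 2 ^ k <= 2 * S n)%nat.
Proof.
  induction n as [|n [k Hk]].
  - exists 0%nat. simpl. lia.
  - destruct (Nat.le_gt_cases (S (S n)) (2 ^ k)).
    + exists k. lia.
    + exists (S k). simpl. lia.
Qed.

Lemma inv_sq_sum_error p : 0 <= PI ^ 2 / 6 - inv_sq_sum p <= 5 / INR (S p).
Proof.
  destruct (pow2_between p) as [k Hk].
  assert (Hn : INR (S p) <= 2 ^ k) by (rewrite <- INR_pow2_pred; apply le_INR; lia).
  assert (HS : 0 < INR (S p)) by apply lt_0_INR, Nat.lt_0_succ.
  assert (HT := inv_sq_sum_incr p (2 ^ k - 1 - p)).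
  replace (p + (2 ^ k - 1 - p))%nat with (2 ^ k - 1)%nat in HT by lia.
  assert (HE := inv_sq_sum_pow2 k).
  assert (4 / 2 ^ k <= 4 / INR (S p)).
  { unfold Rdiv. apply Rmult_le_compat_l; [lra|]. apply Rinv_le_contravar; lra. }
  assert (0 < / INR (S (2 ^ k - 1))) by apply Rinv_0_lt_compat, lt_0_INR, Nat.lt_0_succ.
  replace (5 / INR (S p)) with (4 / INR (S p) + / INR (S p)) by (field; lra).
  lra.
Qed.

Definition harmonic_sum (p : nat) : R := sum_f_R0 (fun k => / INR (S k)) p.

Lemma ln_le_sub_1 y : 0 < y -> ln y <= y - 1.
Proof. intros Hy. assert (H := exp_ineq1_le (ln y)). rewrite exp_ln in H; lra. Qed.

Lemma ln_div_pos a b : 0 < a -> 0 < b -> ln (a / b) = ln a - ln b.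
Proof.
  intros Ha Hb. unfold Rdiv.
  rewrite ln_mult, ln_Rinv by (try apply Rinv_0_lt_compat; lra). ring.
Qed.

Lemma ln_succ_sub_bounds x : 0 < x -> / (x + 1) <= ln (x + 1) - ln x <= / x.
Proof.
  intros Hx.
  assert (H1 := ln_le_sub_1 ((x + 1) / x) ltac:(apply Rdiv_lt_0_compat; lra)).
  assert (H2 := ln_le_sub_1 (x / (x + 1)) ltac:(apply Rdiv_lt_0_compat; lra)).
  rewrite ln_div_pos in H1, H2 by lra.
  replace ((x + 1) / x - 1) with (/ x) in H1 by (field; lra).
  replace (x / (x + 1) - 1) with (- / (x + 1)) in H2 by (field; lra).
  lra.
Qed.

Lemma harmonic_sum_ln_bounds p :
  ln (INR (S p)) <= harmonic_sum p <= 1 + ln (INR (S p)).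
Proof.
  unfold harmonic_sum.
  assert (Hln : forall q, 0 < INR (S q) /\ INR (S (S q)) = INR (S q) + 1).
  { intros q. split; [apply lt_0_INR, Nat.lt_0_succ | apply S_INR]. }
  split.
  - assert (Hlow : ln (INR (S (S p))) <= sum_f_R0 (fun k => / INR (S k)) p).
    { induction p as [|p IH].
      - destruct (Hln 0%nat) as [H0 E]. rewrite E.
        destruct (ln_succ_sub_bounds _ H0). simpl in *. rewrite ln_1 in *. lra.
      - rewrite tech5. destruct (Hln (S p)) as [H0 E]. rewrite E.
        destruct (ln_succ_sub_bounds _ H0). lra. }
    destruct (Hln p) as [H0 E].
    assert (ln (INR (S p)) < ln (INR (S (S p)))) by (apply ln_increasing; lra).
    lra.
  - induction p as [|p IH].
    + simpl. rewrite ln_1. lra.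
    + rewrite tech5. destruct (Hln p) as [H0 E]. rewrite E.
      destruct (ln_succ_sub_bounds _ H0). lra.
Qed.

Definition weighted_inv_sq_sum (p : nat) : R :=
  sum_f_R0 (fun k => (INR (S p) + 1 - INR (S k)) / INR (S k) ^ 2) p.

Lemma weighted_inv_sq_sum_asymptotics p : let N := INR (S p) in
  Rabs (weighted_inv_sq_sum p - (N * (PI ^ 2 / 6) - ln N)) <= 14.
Proof.
  intros N. assert (HN : 1 <= N).
  { unfold N. rewrite S_INR. assert (0 <= INR p) by apply pos_INR. lra. }
  assert (E : weighted_inv_sq_sum p = (N + 1) * inv_sq_sum p - harmonic_sum p).
  { unfold weighted_inv_sq_sum, inv_sq_sum, harmonic_sum.
    rewrite scal_sum, <- minus_sum. apply sum_eq. intros k _.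
    assert (0 < INR (S k)) by apply lt_0_INR, Nat.lt_0_succ. unfold N. field. lra. }
  destruct (inv_sq_sum_error p) as [Z1 Z2]. fold N in Z2.
  destruct (harmonic_sum_ln_bounds p) as [H1 H2]. fold N in H1, H2.
  assert (Hpi := PI_4). assert (Hpi0 := PI_RGT_0).
  assert ((N + 1) * (PI ^ 2 / 6 - inv_sq_sum p) <= 10).
  { apply Rle_trans with ((N + 1) * (5 / N)); [apply Rmult_le_compat_l; lra|].
    apply Rmult_le_reg_r with N; [lra|].
    replace ((N + 1) * (5 / N) * N) with (5 * N + 5) by (field; lra). lra. }
  assert (0 <= (N + 1) * (PI ^ 2 / 6 - inv_sq_sum p)) by (apply Rmult_le_pos; lra).
  rewrite E. apply Rabs_le. split; nra.
Qed.

Lemma lemma8_sum_decomposition B p : B <> 0 ->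
  let N := INR (S p) in
  let x k := PI * INR (S k) * B / N in
  lemma8_sum B (S p) =
    N ^ 2 / (PI ^ 2 * B ^ 2) * weighted_inv_sq_sum p
    + sum_f_R0 (fun k => (N + 1 - INR (S k)) * (/ sin (x k) ^ 2 - / x k ^ 2)) p.
Proof.
  intros HB N x. unfold lemma8_sum, weighted_inv_sq_sum. simpl pred.
  rewrite scal_sum, <- plus_sum. apply sum_eq. intros k _. cbv zeta. fold N. fold (x k).
  transitivity ((N + 1 - INR (S k)) * / x k ^ 2
                + (N + 1 - INR (S k)) * (/ sin (x k) ^ 2 - / x k ^ 2)); [unfold Rdiv; ring|].
  f_equal. unfold x.
  assert (0 < INR (S k)) by apply lt_0_INR, Nat.lt_0_succ.
  assert (0 < N) by apply lt_0_INR, Nat.lt_0_succ.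
  assert (Hpi := PI_RGT_0). field. repeat split; try lra; exact HB.
Qed.

Lemma lemma8_remainder_bound B p : 0 < B < 1 ->
  let N := INR (S p) in
  let x k := PI * INR (S k) * B / N in
  Rabs (sum_f_R0 (fun k => (N + 1 - INR (S k)) * (/ sin (x k) ^ 2 - / x k ^ 2)) p)
  <= (1 + / sin (PI * B) ^ 2) * N ^ 2.
Proof.
  intros HB N x. assert (Hpi := PI_RGT_0).
  replace ((1 + / sin (PI * B) ^ 2) * N ^ 2) with (N * (1 + / sin (PI * B) ^ 2) * N) by ring.
  apply sum_f_R0_Rabs_le. intros k Hk.
  assert (H1 : 1 <= INR (S k)) by (rewrite S_INR; assert (0 <= INR k) by apply pos_INR; lra).
  assert (H2 : INR (S k) <= N) by (apply le_INR; lia).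
  rewrite Rabs_mult. apply Rmult_le_compat; try apply Rabs_pos.
  - rewrite Rabs_right; lra.
  - apply inv_sin_sq_sub_inv_sq_bound; [nra|]. unfold x. split.
    + apply Rdiv_lt_0_compat; [apply Rmult_lt_0_compat; [apply Rmult_lt_0_compat|]|]; lra.
    + apply Rmult_le_reg_r with N; [lra|].
      replace (PI * INR (S k) * B / N * N) with (PI * B * INR (S k)) by (field; lra).
      apply Rmult_le_compat_l; nra.
Qed.

Theorem lemma8 :
  forall B : R, 0 < B < 1 ->
  exists C : R, forall L : nat, (1 <= L)%nat ->
    Rabs (lemma8_sum B L
          - (INR L ^ 3 / (6 * B ^ 2)
             - INR L ^ 2 * ln (INR L) / (PI ^ 2 * B ^ 2)))
    <= C * INR L ^ 2.
Proof.
  intros B HB. assert (Hpi := PI_RGT_0).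
  exists (1 + / sin (PI * B) ^ 2 + 14 / (PI ^ 2 * B ^ 2)).
  intros L HL. destruct L as [|p]; [lia|].
  rewrite (lemma8_sum_decomposition B p ltac:(lra)).
  assert (HR := lemma8_remainder_bound B p HB).
  assert (HW := weighted_inv_sq_sum_asymptotics p).
  cbv zeta in HR, HW |- *. set (N := INR (S p)) in *.
  set (R := sum_f_R0 _ p) in *. set (W := weighted_inv_sq_sum p) in *.
  assert (HN : 0 < N) by apply lt_0_INR, Nat.lt_0_succ.
  assert (Hc : 0 < N ^ 2 / (PI ^ 2 * B ^ 2)).
  { apply Rdiv_lt_0_compat; [apply pow_lt; lra|].
    apply Rmult_lt_0_compat; apply pow_lt; lra. }
  replace (N ^ 2 / (PI ^ 2 * B ^ 2) * W + R - (N ^ 3 / (6 * B ^ 2) - N ^ 2 * ln N / (PI ^ 2 * B ^ 2)))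
    with (R + N ^ 2 / (PI ^ 2 * B ^ 2) * (W - (N * (PI ^ 2 / 6) - ln N))) by (field; repeat split; lra).
  eapply Rle_trans; [apply Rabs_triang|]. rewrite Rabs_mult, (Rabs_right (N ^ 2 / _)) by lra.
  assert (N ^ 2 / (PI ^ 2 * B ^ 2) * Rabs (W - (N * (PI ^ 2 / 6) - ln N))
          <= N ^ 2 / (PI ^ 2 * B ^ 2) * 14) by (apply Rmult_le_compat_l; lra).
  replace ((1 + / sin (PI * B) ^ 2 + 14 / (PI ^ 2 * B ^ 2)) * N ^ 2)
    with ((1 + / sin (PI * B) ^ 2) * N ^ 2 + N ^ 2 / (PI ^ 2 * B ^ 2) * 14) by (unfold Rdiv; ring).
  lra.
Qed.
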